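(* Let $J_1,J_2$ be abelian topological semigroups and $n\in\mathbf{Z}_+$. If $P^n(J_1)$ is finite dimensional, then $P^n(J_1\times J_2)=\sum_{m=0}^n P^m(J_1)\otimes P^{n-m}(J_2)$, i.e. every $p\in P^n(J_1\times J_2)$ is a finite sum of functions $(s,t)\mapsto f(s)g(t)$ with $f\in P^m(J_1)$, $g\in P^{n-m}(J_2)$ for some $0\le m\le n$, and every such sum lies in $P^n(J_1\times J_2)$.
   Context: $\mathbf{Z}_+=\{0,1,2,\dots\}$. For an abelian topological semigroup $S$, a continuous $p:S\to\mathbf{C}$ is a polynomial of degree at most $n$ if for all $s,t\in S$ the map $m\mapsto p(s+mt)$, $m\in\mathbf{Z}_+$, is a polynomial in $m$ of degree at most $n$; $P^n(S)$ is the space of these. $J_1\times J_2$ carries the product topology and componentwise operation. *)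

From HB Require Import structures.
From mathcomp Require Import all_boot all_order all_algebra.
From mathcomp Require Import all_classical all_reals topology normedtype.
From mathcomp Require Import complex.
Set Implicit Arguments. Unset Strict Implicit. Unset Printing Implicit Defensive.
Import Order.TTheory GRing.Theory Num.Theory numFieldTopology.Exports numFieldNormedType.Exports.
Local Open Scope ring_scope.

Definition abelian_top_semigroup (J : topologicalType) (op : J -> J -> J) : Prop :=
  associative op /\ commutative op /\
  continuous (fun x : J * J => op x.1 x.2).

(* componentwise operation on J1 * J2 (product topology is the canonical one) *)
Definition prod_op (J1 J2 : Type) (op1 : J1 -> J1 -> J1) (op2 : J2 -> J2 -> J2)
  : J1 * J2 -> J1 * J2 -> J1 * J2 :=
  fun x y => (op1 x.1 y.1, op2 x.2 y.2).

(* s + m t := s + t + ... + t  (m copies of t); s + 0 t = s *)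
Definition addmul (J : Type) (op : J -> J -> J) (s t : J) (m : nat) : J :=
  iter m (fun x => op x t) s.

(* continuity of a complex valued function, C = R[i] with its usual
   (product = Euclidean) topology: real and imaginary parts continuous *)
Definition continuousC (R : realType) (J : topologicalType) (p : J -> R[i]) : Prop :=
  continuous (fun x => complex.Re (p x)) /\ continuous (fun x => complex.Im (p x)).

Definition is_poly_deg (R : realType) (J : topologicalType) (op : J -> J -> J)
  (n : nat) (p : J -> R[i]) : Prop :=
  continuousC p /\
  forall s t : J, exists q : {poly R[i]},
    (size q <= n.+1)%N /\ forall m : nat, p (addmul op s t m) = q.[m%:R].

Definition Pn_finite_dim (R : realType) (J : topologicalType) (op : J -> J -> J)
  (n : nat) : Prop :=
  exists (k : nat) (b : 'I_k -> J -> R[i]),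
    (forall i, is_poly_deg op n (b i)) /\
    forall p, is_poly_deg op n p ->
      exists c : 'I_k -> R[i], p = (fun x => \sum_(i < k) c i * b i x).

From HB Require Import structures.
From mathcomp Require Import all_boot all_order all_algebra.
From mathcomp Require Import all_classical all_reals topology normedtype.
From mathcomp Require Import complex.
From mathcomp Require Import ring zify.
Import Order.TTheory GRing.Theory Num.Theory numFieldTopology.Exports numFieldNormedType.Exports.
Local Open Scope ring_scope.

(* Fix x, t1 in J1 and y, t2 in J2.  Along every arithmetic progression with
   positive steps in both coordinates, (a, b) |-> p (x + a t1, y + b t2) is a
   polynomial of degree <= n; an interpolation argument upgrades this to a
   polynomial in (a, b) of total degree <= n, so in particular every slice
   p (., y) lies in P^n(J1).  Interpolating the finite dimensional space
   P^n(J1) at finitely many points X_j gives p (x, y) = sum_j p (X_j, y) L_j x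
   with L_j in P^n(J1).  Splitting the L_j along complements D_m of P^(m-1)(J1)
   in P^m(J1), the total degree bound forces the coefficient of an element of
   D_m to lie in P^(n-m)(J2).  The converse inclusion is the degree bound for
   products. *)

Set Implicit Arguments. Unset Strict Implicit.

Definition natpoly (K : comNzRingType) (n : nat) (u : nat -> K) : Prop :=
  exists q : {poly K}, (size q <= n.+1)%N /\ forall m : nat, u m = q.[m%:R].

Section NatPolyClosure.
Variable K : comNzRingType.

Lemma eq_natpoly n (u v : nat -> K) : u =1 v -> natpoly n u -> natpoly n v.
Proof. by move=> e [q [hq hu]]; exists q; split=> // m; rewrite -e. Qed.

Lemma natpoly_cst n (c : K) : natpoly n (fun=> c).
Proof.
exists c%:P; split; last by move=> m; rewrite hornerC.
exact: leq_trans (size_polyC_leq1 _) _.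
Qed.

Lemma natpoly_mono n n' (u : nat -> K) : (n <= n')%N -> natpoly n u -> natpoly n' u.
Proof. by move=> le [q [hq hu]]; exists q; split=> //; apply: leq_trans hq _. Qed.

Lemma natpolyD n (u v : nat -> K) :
  natpoly n u -> natpoly n v -> natpoly n (fun m => u m + v m).
Proof.
move=> [q [hq hu]] [q' [hq' hv]]; exists (q + q'); split.
  by rewrite (leq_trans (size_polyD _ _)) // geq_max hq hq'.
by move=> m; rewrite hornerD hu hv.
Qed.

Lemma natpolyZ n (c : K) (u : nat -> K) : natpoly n u -> natpoly n (fun m => c * u m).
Proof.
move=> [q [hq hu]]; exists (c *: q); split; last by move=> m; rewrite hornerZ hu.
exact: leq_trans (size_scale_leq _ _) _.
Qed.

Lemma natpoly_sum n (I : Type) (r : seq I) (P : pred I) (F : I -> nat -> K) :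
  (forall i, natpoly n (F i)) -> natpoly n (fun m => \sum_(i <- r | P i) F i m).
Proof.
move=> hF; elim: r => [|i r IH]; first by under eq_fun do rewrite big_nil; apply: natpoly_cst.
under eq_fun do rewrite big_cons; case: (P i) => //; exact: natpolyD.
Qed.

Lemma natpolyM a b (u v : nat -> K) :
  natpoly a u -> natpoly b v -> natpoly (a + b) (fun m => u m * v m).
Proof.
move=> [q [hq hu]] [q' [hq' hv]]; exists (q * q'); split.
  by apply: leq_trans (size_polyMleq _ _) _; move: hq hq'; lia.
by move=> m; rewrite hornerM hu hv.
Qed.

End NatPolyClosure.

Section NatPolyUniqueness.
Variable K : numFieldType.

Lemma eq_poly_natS (p q : {poly K}) :
  (forall m : nat, p.[m.+1%:R] = q.[m.+1%:R]) -> p = q.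
Proof.
move=> h; apply/eqP; rewrite -subr_eq0; apply/negPn/negP => nz.
pose rs := [seq (m.+1%:R : K) | m <- iota 0 (size (p - q))].
have : (size rs < size (p - q)%R)%N.
  apply: max_poly_roots nz _ _.
    by apply/allP => z /mapP [m _ ->]; rewrite /root hornerD hornerN h subrr.
  by rewrite map_inj_uniq ?iota_uniq // => a b /eqP; rewrite eqr_nat eqSS => /eqP.
by rewrite size_map size_iota ltnn.
Qed.

Lemma eq_poly_nat (p q : {poly K}) : (forall m : nat, p.[m%:R] = q.[m%:R]) -> p = q.
Proof. by move=> h; apply: eq_poly_natS => m; apply: h. Qed.

End NatPolyUniqueness.

Section Bivariate.
Variable K : numFieldType.

Lemma natpoly_size (p : {poly K}) n : natpoly n (fun m => p.[m%:R]) -> (size p <= n.+1)%N.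
Proof. by case=> q [hq hpq]; rewrite (eq_poly_nat hpq). Qed.

Lemma coef_bigXn N (e : nat -> nat -> K) (deg : nat -> nat -> nat) d :
  (\sum_(k < N) \sum_(l < N) e k l *: 'X^(deg k l))`_d =
  \sum_(k < N) \sum_(l < N) e k l * (deg k l == d)%:R.
Proof.
rewrite coef_sum; apply: eq_bigr => k _; rewrite coef_sum; apply: eq_bigr => l _.
by rewrite coefZ coefXn eq_sym.
Qed.

Definition coef_vanish_above N n (c : nat -> nat -> K) : Prop :=
  forall k l, (k < N)%N -> (l < N)%N -> (n < k + l)%N -> c k l = 0.

Lemma bivar_coef_eq0 N n (c : nat -> nat -> K) :
  (forall a : nat, (0 < a)%N -> natpoly n (fun m : nat =>
     \sum_(k < N) \sum_(l < N) c k l * a%:R ^+ k * m%:R ^+ (k + l))) ->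
  coef_vanish_above N n c.
Proof.
move=> hc k0 l0 hk hl hD; set D := (k0 + l0)%N in hD.
(* As a polynomial in [a], the coefficient of [m ^+ D]; it vanishes on positive integers. *)
pose S := \sum_(k < N) \sum_(l < N) (c k l * ((k + l)%N == D)%:R) *: 'X^k.
have S0 : S = 0.
  apply: eq_poly_natS => a; rewrite horner0.
  pose Pa := \sum_(k < N) \sum_(l < N) (c k l * a.+1%:R ^+ k) *: 'X^(k + l).
  have /natpoly_size hPa : natpoly n (fun m => Pa.[m%:R]).
    have := hc a.+1 isT; apply: eq_natpoly => m; rewrite horner_sum; apply: eq_bigr => k _.
    by rewrite horner_sum; apply: eq_bigr => l _; rewrite hornerZ hornerXn exprD mulrA.
  have := coef_bigXn N (fun k l => c k l * a.+1%:R ^+ k) (fun k l => (k + l)%N) D.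
  rewrite -/Pa nth_default ?(leq_trans hPa hD) // => Pa_D.
  rewrite [RHS]Pa_D /S horner_sum; apply: eq_bigr => k _.
  by rewrite horner_sum; apply: eq_bigr => l _; rewrite hornerZ hornerXn mulrAC.
have := coef_bigXn N (fun k l => c k l * ((k + l)%N == D)%:R) (fun k _ => k) k0.
rewrite -/S S0 coef0 pair_bigA /= (bigD1 (Ordinal hk, Ordinal hl)) //= !eqxx !mulr1.
rewrite big1 ?addr0 // => -[k l] /= /negbTE ne.
case: (eqVneq (k : nat) k0) => [ek|]; last by rewrite mulr0.
suff -> : ((k + l)%N == D) = false by rewrite mulr0 mul0r.
apply: contraFF ne => /eqP; rewrite /D ek => /addnI el.
by rewrite xpair_eqE -!val_eqE /= ek el !eqxx.
Qed.

Lemma natpoly_separately_joint n (E : nat -> nat -> K) :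
  (forall j, natpoly n (E^~ j)) -> (forall i, natpoly n (E i)) ->
  exists c : nat -> nat -> K, forall i j,
    E i j = \sum_(k < n.+1) \sum_(l < n.+1) c k l * i%:R ^+ k * j%:R ^+ l.
Proof.
move=> hcol hrow.
have [qc hqc] := choice hcol; have [qr hqr] := choice hrow.
have inj_nat : injective (fun t : nat => (t%:R : K)).
  by move=> a b /eqP; rewrite eqr_nat => /eqP.
pose L := n.+1.-lagrange (fun t : nat => (t%:R : K)).
exists (fun k l => \sum_(t < n.+1) (qr t)`_l * (tnth L t)`_k) => i j.
have coef_col k : (qc j)`_k = \sum_(t < n.+1) E t j * (tnth L t)`_k.
  rewrite {1}(lagrange_gen (ltn0Sn n) inj_nat (hqc j).1) coef_sum.
  by apply: eq_bigr => t _; rewrite coefCM -(hqc j).2.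
rewrite (hqc j).2 (horner_coef_wide _ (hqc j).1); apply: eq_bigr => k _.
rewrite coef_col; under eq_bigr do rewrite (hqr _).2 (horner_coef_wide _ (hqr _).1).
rewrite mulr_suml; under eq_bigr do rewrite !mulr_suml.
rewrite exchange_big /=; apply: eq_bigr => l _.
by rewrite !mulr_suml; apply: eq_bigr => t _; ring.
Qed.

Lemma size_linear_exp (u v : K) k : (size ((u%:P + v *: 'X) ^+ k)%R <= k.+1)%N.
Proof.
have h1 : (size (u%:P + v *: 'X)%R <= 2)%N.
  rewrite (leq_trans (size_polyD _ _)) // geq_max (leq_trans (size_polyC_leq1 _)) //.
  by rewrite (leq_trans (size_scale_leq _ _)) // size_polyX.
apply: leq_trans (size_poly_exp_leq _ _) _; rewrite ltnS.
by move: h1; case: (size _) => [|[|[|]]] //= _; rewrite ?mul0n ?mul1n.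
Qed.

Lemma bivar_restrict_line N n (c : nat -> nat -> K) : coef_vanish_above N n c ->
  forall u1 v1 u2 v2 : K, exists h : {poly K}, (size h <= n.+1)%N /\ forall z,
    \sum_(k < N) \sum_(l < N) c k l * (u1 + z * v1) ^+ k * (u2 + z * v2) ^+ l = h.[z].
Proof.
move=> hc u1 v1 u2 v2.
exists (\sum_(k < N) \sum_(l < N)
          c k l *: ((u1%:P + v1 *: 'X) ^+ k * (u2%:P + v2 *: 'X) ^+ l)); split.
  rewrite (leq_trans (size_sum _ _ _)) //; apply/bigmax_leqP => k _.
  rewrite (leq_trans (size_sum _ _ _)) //; apply/bigmax_leqP => l _.
  have [hkl|hkl] := ltnP n (k + l); first by rewrite hc // scale0r size_poly0.
  apply: leq_trans (size_scale_leq _ _) _; apply: leq_trans (size_polyMleq _ _) _.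
  by move: (size_linear_exp u1 v1 k) (size_linear_exp u2 v2 l) hkl; lia.
move=> z; rewrite horner_sum; apply: eq_bigr => k _; rewrite horner_sum.
apply: eq_bigr => l _; rewrite hornerZ hornerM !horner_exp !hornerD !hornerC !hornerZ hornerX.
by rewrite mulrA [z * v1]mulrC [z * v2]mulrC.
Qed.

Definition natpoly_on_lines n (F : nat -> nat -> K) : Prop :=
  forall a b al be : nat, (0 < al)%N -> (0 < be)%N ->
    natpoly n (fun m => F (a + m * al)%N (b + m * be)%N).

Lemma natpoly_on_lines_joint n F : natpoly_on_lines n F ->
  exists2 c : nat -> nat -> K, coef_vanish_above n.+1 n c &
    forall i j, F (i + 2 * j)%N (i + j)%N =
                \sum_(k < n.+1) \sum_(l < n.+1) c k l * i%:R ^+ k * j%:R ^+ l.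
Proof.
move=> hF; pose E i j := F (i + 2 * j)%N (i + j)%N.
(* Rows and columns of [E] run along lines of steps (1, 1) and (2, 1). *)
have E_col j : natpoly n (E^~ j).
  by apply: (eq_natpoly _ (hF (2 * j) j 1 1 isT isT))%N => i; rewrite /E; congr F; lia.
have E_row i : natpoly n (E i).
  by apply: (eq_natpoly _ (hF i i 2 1 isT isT))%N => j; rewrite /E; congr F; lia.
have [c hc] := natpoly_separately_joint E_col E_row.
exists c; last exact: hc.
apply: bivar_coef_eq0 => a a_gt0.
have := hF 0 0 a.+2 a.+1 isT isT; apply: eq_natpoly => m.
have -> : F (0 + m * a.+2)%N (0 + m * a.+1)%N = E (m * a)%N m by rewrite /E; congr F; lia.
rewrite hc; apply: eq_bigr => k _; apply: eq_bigr => l _.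
by rewrite natrM exprMn exprD; ring.
Qed.

Lemma natpoly_on_lines_row n F : natpoly_on_lines n F -> natpoly n (F^~ 0%N).
Proof.
(* [F a 0] is the value at [(-a, a)] of the polynomial of [natpoly_on_lines_joint];
   it is reached by extrapolating along the line through [(a, 0)] of step [(a+1, a+1)]. *)
move=> hF; have [c ctop hc] := natpoly_on_lines_joint hF.
have [h [hh hhz]] := bivar_restrict_line ctop 0 (-1) 0 1.
exists h; split=> // a.
have [q [_ hqm]] := hF a 0%N a.+1 a.+1 isT isT.
have [h2 [_ hh2]] := bivar_restrict_line ctop (- a%:R) a.+1%:R a%:R 0.
have q_h2 : q = h2.
  apply: eq_poly_natS => m; rewrite -hqm -hh2.
  set t := (m.+1 * a.+1)%N; have ht : (a <= t)%N by rewrite /t mulSn; lia.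
  have -> : F (a + t)%N (0 + t)%N = F (t - a + 2 * a)%N (t - a + a)%N by congr F; lia.
  rewrite hc natrB //; apply: eq_bigr => k _; apply: eq_bigr => l _.
  by rewrite /t natrM mulr0 addr0 [- _ + _]addrC.
have := hqm 0%N; rewrite mul0n !addn0 => ->.
rewrite q_h2 -hh2 -hhz; apply: eq_bigr => k _; apply: eq_bigr => l _.
by rewrite !mul0r !addr0 !add0r mulrN1 mulr1.
Qed.

Lemma natpoly_on_lines_col n F : natpoly_on_lines n F -> natpoly n (F 0%N).
Proof.
by move=> hF; apply: (natpoly_on_lines_row (F := fun a b => F b a)) => a b *; apply: hF.
Qed.

End Bivariate.

Section Addmul.
Variables (T : Type) (op : T -> T -> T).

Lemma addmulD s t a m : addmul op (addmul op s t a) t m = addmul op s t (a + m).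
Proof. by rewrite /addmul addnC iterD. Qed.

Hypothesis opA : associative op.

Lemma op_addmul_self u t k : op u (addmul op t t k) = addmul op u t k.+1.
Proof.
elim: k => [//|k IH].
by rewrite [addmul op t t k.+1]/addmul iterS -/(addmul _ _ _ _) opA IH.
Qed.

Lemma addmulM s t k m : addmul op s (addmul op t t k) m = addmul op s t (m * k.+1).
Proof.
elim: m => [//|m IH].
rewrite [LHS]/addmul iterS -/(addmul _ _ _ _) IH op_addmul_self addmulD.
by rewrite mulSn addnC.
Qed.

End Addmul.

Lemma addmul_prod (T1 T2 : Type) (op1 : T1 -> T1 -> T1) (op2 : T2 -> T2 -> T2) s t m :
  addmul (prod_op op1 op2) s t m = (addmul op1 s.1 t.1 m, addmul op2 s.2 t.2 m).
Proof.
elim: m => [|m IH]; first by case: s.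
by rewrite [LHS]/addmul iterS -/(addmul _ _ _ _) IH.
Qed.

Section ContinuousC.
Variables (R : realType) (J : topologicalType).

Lemma continuousC_cst (c : R[i]) : continuousC (fun _ : J => c).
Proof. by split; apply: cst_continuous. Qed.

Lemma continuousCD (f g : J -> R[i]) : continuousC f -> continuousC g ->
  continuousC (fun x => f x + g x).
Proof.
have ReD (u v : R[i]) : complex.Re (u + v) = complex.Re u + complex.Re v by case: u; case: v.
have ImD (u v : R[i]) : complex.Im (u + v) = complex.Im u + complex.Im v by case: u; case: v.
move=> [fRe fIm] [gRe gIm]; split=> x.
  have -> : (fun x => complex.Re (f x + g x)) =
            (fun x => complex.Re (f x)) + (fun x => complex.Re (g x)).
    by apply: funext => y; rewrite ReD.
  exact: continuousD (fRe x) (gRe x).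
have -> : (fun x => complex.Im (f x + g x)) =
          (fun x => complex.Im (f x)) + (fun x => complex.Im (g x)).
  by apply: funext => y; rewrite ImD.
exact: continuousD (fIm x) (gIm x).
Qed.

Lemma continuousCM (f g : J -> R[i]) : continuousC f -> continuousC g ->
  continuousC (fun x => f x * g x).
Proof.
have ReM (u v : R[i]) :
  complex.Re (u * v) = complex.Re u * complex.Re v - complex.Im u * complex.Im v.
  by case: u => ? ?; case: v.
have ImM (u v : R[i]) :
  complex.Im (u * v) = complex.Re u * complex.Im v + complex.Im u * complex.Re v.
  by case: u => ? ?; case: v.
move=> [fRe fIm] [gRe gIm]; split=> x.
  have -> : (fun x => complex.Re (f x * g x)) =
            (fun x => complex.Re (f x)) \* (fun x => complex.Re (g x)) -
            (fun x => complex.Im (f x)) \* (fun x => complex.Im (g x)).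
    by apply: funext => y; rewrite ReM.
  exact: continuousB (continuousM (fRe x) (gRe x)) (continuousM (fIm x) (gIm x)).
have -> : (fun x => complex.Im (f x * g x)) =
          (fun x => complex.Re (f x)) \* (fun x => complex.Im (g x)) +
          (fun x => complex.Im (f x)) \* (fun x => complex.Re (g x)).
  by apply: funext => y; rewrite ImM.
exact: continuousD (continuousM (fRe x) (gIm x)) (continuousM (fIm x) (gRe x)).
Qed.

Lemma continuousC_sum (I : Type) (r : seq I) (P : pred I) (F : I -> J -> R[i]) :
  (forall i, continuousC (F i)) -> continuousC (fun x => \sum_(i <- r | P i) F i x).
Proof.
move=> hF; elim: r => [|i r IH].
  by under eq_fun do rewrite big_nil; apply: continuousC_cst.
under eq_fun do rewrite big_cons; case: (P i) => //; exact: continuousCD.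
Qed.

Lemma continuousC_comp (U : topologicalType) (f : U -> R[i]) (h : J -> U) :
  continuous h -> continuousC f -> continuousC (f \o h).
Proof.
move=> hh [fRe fIm]; split=> x; first exact: continuous_comp (hh x) (fRe (h x)).
exact: continuous_comp (hh x) (fIm (h x)).
Qed.

End ContinuousC.

Section PolyDeg.
Variables (R : realType) (J : topologicalType) (op : J -> J -> J).

Lemma is_poly_deg_cst n (c : R[i]) : is_poly_deg op n (fun=> c).
Proof. by split=> [|s t]; [apply: continuousC_cst | apply: natpoly_cst]. Qed.

Lemma is_poly_deg_mono n n' (f : J -> R[i]) :
  (n <= n')%N -> is_poly_deg op n f -> is_poly_deg op n' f.
Proof. by move=> le [fC fP]; split=> // s t; apply: natpoly_mono le (fP s t). Qed.

Lemma is_poly_degD n (f g : J -> R[i]) : is_poly_deg op n f -> is_poly_deg op n g ->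
  is_poly_deg op n (fun x => f x + g x).
Proof. by move=> [fC fP] [gC gP]; split=> [|s t]; [apply: continuousCD | apply: natpolyD]. Qed.

Lemma is_poly_degZ n (c : R[i]) (f : J -> R[i]) : is_poly_deg op n f ->
  is_poly_deg op n (fun x => c * f x).
Proof.
move=> [fC fP]; split=> [|s t]; last exact: natpolyZ.
by apply: continuousCM => //; apply: continuousC_cst.
Qed.

Lemma is_poly_deg_sum n (I : Type) (r : seq I) (P : pred I) (F : I -> J -> R[i]) :
  (forall i, is_poly_deg op n (F i)) ->
  is_poly_deg op n (fun x => \sum_(i <- r | P i) F i x).
Proof.
move=> hF; split=> [|s t]; first by apply: continuousC_sum => i; case: (hF i).
by apply: natpoly_sum => i; case: (hF i) => _; apply.
Qed.

End PolyDeg.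

Section ProductPolyDeg.
Variables (R : realType) (J1 J2 : topologicalType).
Variables (op1 : J1 -> J1 -> J1) (op2 : J2 -> J2 -> J2).

Lemma is_poly_deg_tensor a b (f : J1 -> R[i]) (g : J2 -> R[i]) :
  is_poly_deg op1 a f -> is_poly_deg op2 b g ->
  is_poly_deg (prod_op op1 op2) (a + b) (fun x => f x.1 * g x.2).
Proof.
move=> [fC fP] [gC gP]; split=> [|s t].
  apply: continuousCM; first exact: continuousC_comp (fun _ => cvg_fst) fC.
  exact: continuousC_comp (fun _ => cvg_snd) gC.
by have := natpolyM (fP s.1 t.1) (gP s.2 t.2); apply: eq_natpoly => m; rewrite addmul_prod.
Qed.

Hypotheses (op1A : associative op1) (op2A : associative op2).
Variables (n : nat) (p : J1 * J2 -> R[i]).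
Hypothesis p_deg : is_poly_deg (prod_op op1 op2) n p.

Lemma is_poly_deg_on_lines x t1 y t2 :
  natpoly_on_lines n (fun a b => p (addmul op1 x t1 a, addmul op2 y t2 b)).
Proof.
move=> a b al be al_gt0 be_gt0.
have := p_deg.2 (addmul op1 x t1 a, addmul op2 y t2 b)
                (addmul op1 t1 t1 al.-1, addmul op2 t2 t2 be.-1).
apply: eq_natpoly => m.
by rewrite addmul_prod /= !addmulM // !prednK // !addmulD.
Qed.

Lemma is_poly_deg_fst_slice y : is_poly_deg op1 n (fun x => p (x, y)).
Proof.
split=> [|s t].
  apply: (continuousC_comp (h := fun x => (x, y))) p_deg.1 => x.
  by apply: cvg_pair; [exact: cvg_id | exact: cvg_cst].
exact: natpoly_on_lines_row (is_poly_deg_on_lines s t y y).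
Qed.

Lemma natpoly_snd_slice x y t2 : natpoly n (fun b => p (x, addmul op2 y t2 b)).
Proof. exact: natpoly_on_lines_col (is_poly_deg_on_lines x x y t2). Qed.

End ProductPolyDeg.

Lemma exists_argmax (T : Type) (t0 : T) (f : T -> nat) k :
  (forall t, (f t <= k)%N) -> exists t, forall t', (f t' <= f t)%N.
Proof.
move=> f_le; have exP : exists j, `[< exists t, f t = j >].
  by exists (f t0); apply/asboolP; exists t0.
have ubP j : `[< exists t, f t = j >] -> (j <= k)%N by move=> /asboolP[t <-].
case: (ex_maxnP exP ubP) => _ /asboolP[t <-] f_max.
by exists t => t'; apply: f_max; apply/asboolP; exists t'.
Qed.

Section RowSpaces.
Variables (F : fieldType) (k : nat).

Lemma rowspace_of_subspace (P : 'rV[F]_k -> Prop) :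
  P 0 -> (forall a u v, P u -> P v -> P (a *: u + v)) ->
  exists A : 'M[F]_k, forall v, P v <-> (v <= A)%MS.
Proof.
move=> P0 Plin.
have PZ a u : P u -> P (a *: u) by move=> Pu; rewrite -[_ *: u]addr0; apply: Plin.
have PD u v : P u -> P v -> P (u + v) by move=> Pu Pv; rewrite -[u]scale1r; apply: Plin.
pose Q (A : 'M[F]_k) := forall w : 'rV_k, (w <= A)%MS -> P w.
have Q0 : Q 0 by move=> w; rewrite submx0 => /eqP ->.
have [[A QA] /= A_max] := exists_argmax (exist Q 0 Q0) (fun A => rank_leq_col (sval A)).
exists A => v; split; last exact: QA.
(* [A] has maximal rank among the subspaces inside [P], so it absorbs [v]. *)
move=> Pv; have QAv : Q (A + v)%MS.
  move=> w /sub_addsmxP [[u1 u2] ->] /=; apply: PD; first by apply: QA; apply: submxMl.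
  by rewrite [u2]mx11_scalar mul_scalar_mx; apply: PZ.
have /= rank_le := A_max (exist Q _ QAv).
suff : (A + v <= A)%MS by apply: submx_trans; apply: addsmxSr.
rewrite -(mxrank_leqif_sup (addsmxSl A v)).
by apply/eqP/anti_leq; rewrite rank_le mxrankS ?addsmxSl.
Qed.

Lemma spanning_points (J : Type) (b : 'I_k -> J -> F) :
  exists N (X : 'I_N -> J),
    forall z, (\row_i b i z <= \matrix_(j < N, i < k) b i (X j))%MS.
Proof.
pose V N (X : 'I_N -> J) := \matrix_(j < N, i < k) b i (X j).
have X0 : 'I_0 -> J by case.
have [[N X] /= V_max] := exists_argmax (existT (fun N => 'I_N -> J) 0%N X0)
  (fun NX => rank_leq_col (V (projT1 NX) (projT2 NX))).
exists N, X => z.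
(* [X] has maximal rank, so adjoining the point [z] adds no new row. *)
pose Xz (j : 'I_(N + 1)) := if fintype.split j is inl j1 then X j1 else z.
have VXz_row j : row j (V N X) = row (lshift 1 j) (V (N + 1)%N Xz).
  by apply/rowP => i; rewrite !mxE /Xz (unsplitK (inl _ j)).
have V_sub : (V N X <= V (N + 1)%N Xz)%MS.
  by apply/row_subP => j; rewrite VXz_row row_sub.
have /= rank_le := V_max (existT _ (N + 1)%N Xz).
have Vz_sub : (V (N + 1)%N Xz <= V N X)%MS.
  by rewrite -(mxrank_leqif_sup V_sub); apply/eqP/anti_leq; rewrite rank_le mxrankS.
apply: submx_trans Vz_sub.
have -> : \row_i b i z = row (rshift N (ord0 : 'I_1)) (V (N + 1)%N Xz).
  by apply/rowP => i; rewrite !mxE /Xz (unsplitK (inr _ (ord0 : 'I_1))).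
exact: row_sub.
Qed.

End RowSpaces.

Section GradedFiltration.
Variables (F : fieldType) (k : nat) (U : nat -> 'M[F]_k).

Definition prev_space m : 'M[F]_k := if m is m'.+1 then U m' else 0.

Definition graded_part m : 'M[F]_k := (U m :\: prev_space m)%MS.

Lemma graded_part_sub m : (graded_part m <= U m)%MS.
Proof. exact: diffmxSl. Qed.

Lemma graded_split M (w : 'rV[F]_k) : (w <= U M)%MS ->
  exists d e, [/\ (d <= graded_part M)%MS, (e <= prev_space M)%MS & w = d + e].
Proof.
move=> w_sub; have /eqmxP/andP[_ U_sub] := addsmx_diff_cap_eq (U M) (prev_space M).
case/sub_addsmxP: (submx_trans w_sub U_sub) => -[u1 u2] -> /=.
exists (u1 *m graded_part M), (u2 *m (U M :&: prev_space M)%MS); split=> //.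
  exact: submxMl.
by apply: submx_trans (submxMl _ _) _; apply: capmxSr.
Qed.

Lemma graded_decomposition M (w : 'rV[F]_k) : (w <= U M)%MS ->
  exists ws : nat -> 'rV[F]_k,
    (forall m, (ws m <= graded_part m)%MS) /\ w = \sum_(m < M.+1) ws m.
Proof.
elim: M w => [|M IH] w /graded_split[d [e [d_sub e_sub ->]]].
  move: e_sub; rewrite submx0 => /eqP ->.
  exists (fun m => if m == 0%N then d else 0); split; last by rewrite big_ord1 addr0.
  by move=> m; case: eqP => [->|_] //; rewrite sub0mx.
have [ws [ws_sub ->]] := IH e e_sub.
exists (fun m => if m == M.+1 then d else ws m); split.
  by move=> m; case: eqP => [->|].
rewrite [RHS]big_ord_recr /= eqxx [RHS]addrC; congr (_ + _); apply: eq_bigr => i _.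
by rewrite ifN // neq_ltn ltn_ord.
Qed.

Hypothesis U_mono : forall m m', (m <= m')%N -> (U m <= U m')%MS.

Lemma graded_sum_eq0 (s : nat) (vs : nat -> 'rV[F]_k) :
  (forall m, (vs m <= graded_part m)%MS) ->
  forall M, ((\sum_(m < M) vs m)%R <= U s)%MS ->
  forall m, (s < m < M)%N -> vs m = 0.
Proof.
move=> vs_sub; elim=> [_ m|M IH]; first by rewrite ltn0 andbF.
rewrite big_ord_recr /= => sum_sub m /andP[sm mM].
have [Ms|sM] := leqP M s; first by move: mM sm Ms; lia.
have rest_sub : ((\sum_(i < M) vs i)%R <= U M.-1)%MS.
  apply: summx_sub => i _; apply: submx_trans (vs_sub i) _.
  by apply: submx_trans (graded_part_sub _) _; apply: U_mono; move: (ltn_ord i); lia.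
(* [vs M] lies in [U M.-1], which meets [graded_part M] trivially. *)
have vsM0 : vs M = 0.
  apply/eqP; rewrite -submx0 -(capmx_diff (U M) (prev_space M)) sub_capmx vs_sub /=.
  rewrite (_ : prev_space M = U M.-1); last by case: (M) sM.
  rewrite -(addKr (\sum_(i < M) vs i) (vs M)) addmx_sub ?eqmx_opp //.
  by apply: submx_trans sum_sub _; apply: U_mono; lia.
move: mM; rewrite ltnS leq_eqVlt => /orP[/eqP -> //|mM].
by apply: IH; rewrite ?sm //; move: sum_sub; rewrite vsM0 addr0.
Qed.

End GradedFiltration.

Section Decomposition.
Variables (R : realType) (J1 J2 : topologicalType).
Variables (op1 : J1 -> J1 -> J1) (op2 : J2 -> J2 -> J2).
Hypotheses (op1A : associative op1) (op2A : associative op2).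
Variables (n k : nat) (b : 'I_k -> J1 -> R[i]).
Hypothesis b_deg : forall i, is_poly_deg op1 n (b i).
Hypothesis b_span : forall f, is_poly_deg op1 n f ->
  exists c : 'I_k -> R[i], f = (fun x => \sum_(i < k) c i * b i x).
Local Notation C := R[i].

Definition lincomb (c : 'rV[C]_k) (x : J1) : C := (c *m \col_i b i x) 0 0.

Lemma lincombE c x : lincomb c x = \sum_i c 0 i * b i x.
Proof. by rewrite /lincomb !mxE; apply: eq_bigr => i _; rewrite mxE. Qed.

Lemma lincombB u v x : lincomb (u - v) x = lincomb u x - lincomb v x.
Proof. by rewrite /lincomb mulmxBl !mxE. Qed.

Lemma lincombZ a u x : lincomb (a *: u) x = a * lincomb u x.
Proof. by rewrite /lincomb -scalemxAl mxE. Qed.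

Lemma lincomb_sum (I : Type) (r : seq I) (P : pred I) F x :
  lincomb (\sum_(i <- r | P i) F i) x = \sum_(i <- r | P i) lincomb (F i) x.
Proof. by rewrite /lincomb mulmx_suml summxE. Qed.

Lemma is_poly_deg_lincomb c : is_poly_deg op1 n (lincomb c).
Proof.
rewrite (_ : lincomb c = fun x => \sum_i c 0 i * b i x); last first.
  by apply: funext => x; apply: lincombE.
by apply: is_poly_deg_sum => i; apply: is_poly_degZ.
Qed.

Lemma lincomb_span f : is_poly_deg op1 n f -> exists c, f = lincomb c.
Proof.
move=> /b_span[c ->]; exists (\row_i c i); apply: funext => x.
by rewrite lincombE; apply: eq_bigr => i _; rewrite mxE.
Qed.

Lemma lincomb_interpolation : exists N (X : 'I_N -> J1) (P : 'M[C]_(N, k)),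
  forall c x, lincomb c x = lincomb ((\row_j lincomb c (X j)) *m P) x.
Proof.
have [N [X X_span]] := spanning_points b.
set V := \matrix_(j < N, i < k) b i (X j).
exists N, X, (pinvmx V^T) => c x.
have lincomb_X c' j : lincomb c' (X j) = (c' *m V^T) 0 j.
  by rewrite lincombE !mxE; apply: eq_bigr => i _; rewrite !mxE.
have -> : \row_j lincomb c (X j) = c *m V^T by apply/rowP => j; rewrite mxE lincomb_X.
set c' := c *m V^T *m pinvmx V^T.
have c'V : (c' - c) *m V^T = 0 by rewrite mulmxBl mulmxKpV ?submxMl // subrr.
suff : lincomb (c' - c) x = 0 by rewrite lincombB => /eqP; rewrite subr_eq0 => /eqP.
have [u u_row] := submxP (X_span x).
have b_x i : b i x = (u *m V) 0 i by rewrite -u_row mxE.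
rewrite lincombE; under eq_bigr do rewrite b_x [(u *m V) _ _]mxE big_distrr.
rewrite exchange_big big1 // => j _.
transitivity (u 0 j * ((c' - c) *m V^T) 0 j); last by rewrite c'V mxE mulr0.
by rewrite mxE big_distrr; apply: eq_bigr => i _; rewrite [V^T _ _]mxE; exact: mulrCA.
Qed.

Lemma degree_filtration : exists U : nat -> 'M[C]_k,
  forall m v, is_poly_deg op1 m (lincomb v) <-> (v <= U m)%MS.
Proof.
suff /choice[U hU] : forall m, exists U : 'M[C]_k,
    forall v, is_poly_deg op1 m (lincomb v) <-> (v <= U)%MS by exists U.
move=> m; apply: rowspace_of_subspace => [|a u v hu hv].
  rewrite (_ : lincomb 0 = fun=> 0); first exact: is_poly_deg_cst.
  by apply: funext => x; rewrite /lincomb mul0mx mxE.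
rewrite (_ : lincomb _ = fun x => a * lincomb u x + lincomb v x).
  by apply: is_poly_degD => //; apply: is_poly_degZ.
by apply: funext => x; rewrite /lincomb mulmxDl -scalemxAl !mxE.
Qed.

Variables (N : nat) (X : 'I_N -> J1) (P : 'M[C]_(N, k)) (U : nat -> 'M[C]_k).
Hypothesis X_interp : forall c x, lincomb c x = lincomb ((\row_j lincomb c (X j)) *m P) x.
Hypothesis U_deg : forall m v, is_poly_deg op1 m (lincomb v) <-> (v <= U m)%MS.

Lemma filtration_mono m m' : (m <= m')%N -> (U m <= U m')%MS.
Proof.
move=> le_mm'; apply/row_subP => i; apply/U_deg; apply: is_poly_deg_mono le_mm' _.
by apply/U_deg; apply: row_sub.
Qed.

Lemma filtration_full (v : 'rV[C]_k) : (v <= U n)%MS.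
Proof. by apply/U_deg; apply: is_poly_deg_lincomb. Qed.

Lemma graded_part_deg m i : is_poly_deg op1 m (lincomb (row i (graded_part U m))).
Proof. by apply/U_deg; apply: submx_trans (row_sub _ _) (graded_part_sub _ _). Qed.

Variables (p : J1 * J2 -> C).
Hypothesis p_deg : is_poly_deg (prod_op op1 op2) n p.

Lemma interpolate_fst x y : p (x, y) = \sum_j p (X j, y) * lincomb (row j P) x.
Proof.
have [c c_def] := lincomb_span (is_poly_deg_fst_slice op1A op2A p_deg y).
have p_y x' : p (x', y) = lincomb c x' by rewrite -c_def.
rewrite p_y X_interp mulmx_sum_row lincomb_sum; apply: eq_bigr => j _.
by rewrite lincombZ mxE p_y.
Qed.

Lemma coef_snd_slice_deg y t2 (G : 'I_N -> {poly C}) :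
  (forall j, (size (G j) <= n.+1)%N) ->
  (forall j b', p (X j, addmul op2 y t2 b') = (G j).[b'%:R]) ->
  forall l, is_poly_deg op1 (n - l) (lincomb (\sum_j (G j)`_l *: row j P)).
Proof.
move=> G_size G_val l; split=> [|x t1]; first exact: (is_poly_deg_lincomb _).1.
have [W W_val] := choice (fun j => (is_poly_deg_lincomb (row j P)).2 x t1).
(* [c k' l'] is the coefficient of [a ^+ k' * b ^+ l'] in [p (x + a t1, y + b t2)]. *)
pose c k' l' := \sum_j (W j)`_k' * (G j)`_l'.
have c_top : coef_vanish_above n.+1 n c.
  apply: bivar_coef_eq0 => al al_gt0.
  have := is_poly_deg_on_lines op1A op2A p_deg x t1 y t2 0 0 al_gt0 (ltn0Sn 0).
  apply: eq_natpoly => m; rewrite !add0n muln1 interpolate_fst.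
  rewrite (eq_bigr (fun j => \sum_(k' < n.+1) \sum_(l' < n.+1)
       (W j)`_k' * (G j)`_l' * al%:R ^+ k' * m%:R ^+ (k' + l'))); last first.
    move=> j _; rewrite G_val (W_val j).2 (horner_coef_wide _ (W_val j).1).
    rewrite (horner_coef_wide _ (G_size j)) mulrC mulr_suml; apply: eq_bigr => k' _.
    by rewrite mulr_sumr; apply: eq_bigr => l' _; rewrite natrM exprMn exprD; ring.
  rewrite exchange_big; apply: eq_bigr => k' _; rewrite exchange_big.
  by apply: eq_bigr => l' _; rewrite /c !mulr_suml.
exists (\sum_j (G j)`_l *: W j); split; last first.
  move=> m; rewrite lincomb_sum horner_sum; apply: eq_bigr => j _.
  by rewrite lincombZ hornerZ (W_val j).2.
apply/leq_sizeP => k' lt_k'; rewrite coef_sum.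
have [l_le|l_gt] := leqP l n; last first.
  by apply: big1 => j _; rewrite coefZ nth_default ?mul0r // (leq_trans (G_size j)).
have [k'_le|k'_gt] := leqP k' n; last first.
  by apply: big1 => j _; rewrite coefZ [(W j)`_k']nth_default ?mulr0 // (leq_trans (W_val j).1).
rewrite -[RHS](c_top k' l) //; last by move: lt_k'; lia.
by apply: eq_bigr => j _; rewrite coefZ mulrC.
Qed.

Variable WS : 'I_N -> nat -> 'rV[C]_k.
Hypothesis WS_graded : forall j m, (WS j m <= graded_part U m)%MS.
Hypothesis WS_sum : forall j, row j P = \sum_(m < n.+1) WS j m.

Definition snd_factor m (i : 'I_k) (y : J2) : C :=
  \sum_j p (X j, y) * (WS j m *m pinvmx (graded_part U m)) 0 i.

Lemma fst_snd_factor_decomposition x y :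
  p (x, y) = \sum_(m < n.+1) \sum_(i < k)
               lincomb (row i (graded_part U m)) x * snd_factor m i y.
Proof.
have row_P_x j : lincomb (row j P) x = \sum_(m < n.+1) \sum_(i < k)
    (WS j m *m pinvmx (graded_part U m)) 0 i * lincomb (row i (graded_part U m)) x.
  rewrite WS_sum lincomb_sum; apply: eq_bigr => m _.
  rewrite -{1}(mulmxKpV (WS_graded j m)) mulmx_sum_row lincomb_sum.
  by apply: eq_bigr => i _; rewrite lincombZ.
rewrite interpolate_fst; under eq_bigr do rewrite row_P_x mulr_sumr.
rewrite exchange_big; apply: eq_bigr => m _; under eq_bigr do rewrite mulr_sumr.
rewrite exchange_big; apply: eq_bigr => i _.
by rewrite /snd_factor mulr_sumr; apply: eq_bigr => j _; ring.
Qed.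

Lemma snd_factor_deg m i : (m <= n)%N -> is_poly_deg op2 (n - m) (snd_factor m i).
Proof.
move=> m_le; split=> [|y t2].
  apply: continuousC_sum => j; apply: continuousCM; last exact: continuousC_cst.
  apply: (continuousC_comp (h := fun y => (X j, y))) p_deg.1 => y.
  by apply: cvg_pair; [exact: cvg_cst | exact: cvg_id].
have [G G_val] := choice (fun j => natpoly_snd_slice op1A op2A p_deg (X j) y t2).
exists (\sum_j (WS j m *m pinvmx (graded_part U m)) 0 i *: G j); split; last first.
  move=> b'; rewrite /snd_factor horner_sum; apply: eq_bigr => j _.
  by rewrite hornerZ (G_val j).2 mulrC.
apply/leq_sizeP => l lt_l; rewrite coef_sum.
have [l_le|l_gt] := leqP l n; last first.
  by apply: big1 => j _; rewrite coefZ nth_default ?mulr0 // (leq_trans (G_val j).1).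
(* The graded pieces of the coefficient of [b ^+ l]: they add up to an element of
   [U (n - l)], so the piece of degree [m > n - l] vanishes. *)
pose Gam m' := \sum_j (G j)`_l *: WS j m'.
have Gam_graded m' : (Gam m' <= graded_part U m')%MS.
  by apply: summx_sub => j _; apply: scalemx_sub.
have Gam_sum : ((\sum_(m' < n.+1) Gam m')%R <= U (n - l))%MS.
  rewrite exchange_big (eq_bigr (fun j => (G j)`_l *: row j P)); last first.
    by move=> j _; rewrite WS_sum scaler_sumr.
  apply/U_deg/coef_snd_slice_deg => [j|j b']; [exact: (G_val j).1 | exact: (G_val j).2].
have Gam_m0 : Gam m = 0.
  by apply: (graded_sum_eq0 filtration_mono Gam_graded Gam_sum); move: lt_l m_le; lia.
transitivity ((Gam m *m pinvmx (graded_part U m)) 0 i); last by rewrite Gam_m0 mul0mx mxE.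
rewrite /Gam mulmx_suml summxE; apply: eq_bigr => j _.
by rewrite coefZ -scalemxAl !mxE mulrC.
Qed.

End Decomposition.

Lemma is_poly_deg_prod_decomposition (R : realType) (J1 J2 : topologicalType)
  (op1 : J1 -> J1 -> J1) (op2 : J2 -> J2 -> J2) (n : nat) (p : J1 * J2 -> R[i]) :
  associative op1 -> associative op2 -> Pn_finite_dim R op1 n ->
  is_poly_deg (prod_op op1 op2) n p ->
  exists (K : nat) (ms : 'I_K -> nat) (f : 'I_K -> J1 -> R[i]) (g : 'I_K -> J2 -> R[i]),
    (forall i, (ms i <= n)%N /\ is_poly_deg op1 (ms i) (f i) /\
               is_poly_deg op2 (n - ms i) (g i)) /\
    p = (fun x => \sum_(i < K) f i x.1 * g i x.2).
Proof.
move=> op1A op2A [k [b [b_deg b_span]]] p_deg.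
have [N [X [P X_interp]]] := lincomb_interpolation b.
have [U U_deg] := degree_filtration op1 b.
have /choice[WS WS_dec] : forall j, exists ws : nat -> 'rV[R[i]]_k,
    (forall m, (ws m <= graded_part U m)%MS) /\ row j P = \sum_(m < n.+1) ws m.
  by move=> j; apply: graded_decomposition (filtration_full b_deg U_deg _).
have WS_graded j := (WS_dec j).1; have WS_sum j := (WS_dec j).2.
pose I := {: 'I_n.+1 * 'I_k}.
exists #|I|, (fun t : 'I_#|I| => (enum_val t).1 : nat),
  (fun t : 'I_#|I| => lincomb b (row (enum_val t).2 (graded_part U (enum_val t).1))),
  (fun t : 'I_#|I| => snd_factor X U p WS (enum_val t).1 (enum_val t).2); split.
  move=> t /=; have m_le : ((enum_val t).1 <= n)%N by rewrite -ltnS ltn_ord.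
  split=> //; split; first exact: graded_part_deg U_deg _ _.
  have g_deg := snd_factor_deg op1A op2A b_deg b_span X_interp U_deg p_deg WS_graded WS_sum.
  exact: g_deg _ _ m_le.
apply: funext => -[x y] /=.
rewrite (fst_snd_factor_decomposition op1A op2A b_span X_interp p_deg WS_graded WS_sum).
by rewrite pair_big /= (big_enum_val (A := I)).
Qed.

Unset Implicit Arguments.

Theorem lemma3p2 (R : realType) (J1 J2 : topologicalType)
  (op1 : J1 -> J1 -> J1) (op2 : J2 -> J2 -> J2)
  (h1 : abelian_top_semigroup op1) (h2 : abelian_top_semigroup op2)
  (n : nat) (hfin : Pn_finite_dim R op1 n) :
  forall p : J1 * J2 -> R[i],
    is_poly_deg (prod_op op1 op2) n p <->
    exists (k : nat) (ms : 'I_k -> nat) (f : 'I_k -> J1 -> R[i])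
           (g : 'I_k -> J2 -> R[i]),
      (forall i, (ms i <= n)%N /\ is_poly_deg op1 (ms i) (f i) /\
                 is_poly_deg op2 (n - ms i) (g i)) /\
      p = (fun x => \sum_(i < k) f i x.1 * g i x.2).
Proof.
move=> p; split; first exact: is_poly_deg_prod_decomposition h1.1 h2.1 hfin.
case=> K [ms [f [g [fg_deg ->]]]].
apply: is_poly_deg_sum => t; have [m_le [f_deg g_deg]] := fg_deg t.
by have := is_poly_deg_tensor f_deg g_deg; rewrite subnKC.
Qed.
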